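(* Let $L$ be an oriented, ordered, compatible virtual link diagram with affine bilabeling $C$. Then the multi-variable affine index polynomial $p_{(L,C)}$ is a Vassiliev invariant of order one of the pair $(L,C)$. That is: - its extension vanishes on every compatible singular virtual link (with the induced coloring) having two or more double points; and - it does not vanish on every compatible singular virtual link with one double point. As a consequence, the following are also Vassiliev invariants of order one: - the Affine Index Polynomial $P_K(t)$ of virtual knots; and - Kauffman's affine index polynomial $P_L(t)$ of compatible virtual links with a given affine labeling.
   Context: **Diagrams.** A virtual link diagram is an oriented planar diagram of ordered closed curves $L_1,\dots,L_n$ (components) with classical crossings (with over/under information) and virtual crossings, up to classical and virtual Reidemeister moves. **Crossing conventions.** Draw a classical crossing with both strands oriented upward. - The bottom-left-to-top-right strand has index change $-1$; the bottom-right-to-top-left strand has index change $+1$. - The crossing is positive ($\operatorname{sgn}=+1$) if the overstrand is the bottom-left-to-top-right strand, and negative otherwise. - Self-crossings have both strands on one component; external crossings have strands on different components. - $L$ is compatible if, for each $i$, the sum of index changes of $L_i$ over its passages through external classical crossings is $0$. **Affine bilabeling $C$.** - Each component $L_i$ gets a starting point with bilabel $(a^{(i)}_1,a^{(i)}_2)$ of formal integer variables, distinct for different components. - The bilabel is carried along $L_i$ in its orientation and is unchanged at virtual crossings. - On passing a classical crossing with index change $\varepsilon$, the first entry changes by $\varepsilon$ at a self-crossing, and the second entry changes by $\varepsilon$ at an external crossing. **Weights and polynomial.** Let $|(x,y)|=x+y$. With both strands drawn upward: - if $c$ is positive, $W(c)=|\text{bottom-left}|-|\text{top-left}|$; - if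 $c$ is negative, $W(c)=|\text{bottom-right}|-|\text{top-right}|$. Then $p_{(L,C)}(t_1,\dots,t_n)=\sum_c\operatorname{sgn}(c)(t_{o(c)}^{W(c)}-1)$, summed over classical crossings, where $o(c)$ is the component of the overstrand. **Kauffman's polynomial.** - A single label per component is propagated by adding the index change at every classical crossing. - Weights are the same differences of single labels. - $P_L(t)=\sum_c\operatorname{sgn}(c)(t^{W(c)}-1)$. - For a virtual knot this is the Affine Index Polynomial $P_K(t)$. **Vassiliev invariants.** - A singular virtual link also has finitely many double points. - An invariant $V$ is extended to singular links by $V(L_\times)=V(L_+)-V(L_-)$, where $L_\pm$ replace a double point by a positive/negative classical crossing; this is applied iteratively. - Colorings of singular links are obtained by treating double points as crossings for label propagation. Label propagation does not depend on crossing sign, so all resolutions inherit the same labels. - $V$ has order $\le m$ if its extension vanishes on all singular links with more than $m$ double points. - Order one means order $\le 1$ but not order $\le 0$. *)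

From HB Require Import structures.
From mathcomp Require Import all_boot all_algebra.
Set Implicit Arguments. Unset Strict Implicit. Unset Printing Implicit Defensive.
Import GRing.Theory Num.Theory.
Local Open Scope ring_scope.

(* A diagram with n components and m crossings (classical crossings or double
   points) is given by, for each component i : 'I_n, the sequence [w i] of its
   passages through crossings, read in the orientation from its starting
   point.  A passage is a pair (c, s) : 'I_m * bool:  drawing crossing c with
   both strands upward, s = true means the passage is the
   bottom-left-to-top-right strand (index change -1) and s = false the
   bottom-right-to-top-left strand (index change +1).  Virtual crossings do not
   appear (they do not affect anything below). *)

Definition wf_words (n m : nat) (w : 'I_n -> seq ('I_m * bool)) : bool :=
  perm_eq (flatten [seq w i | i <- enum 'I_n]) (enum {: 'I_m * bool}).

Definition comp (n m : nat) (w : 'I_n -> seq ('I_m * bool)) (x : 'I_m * bool)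
  : option 'I_n := [pick i | x \in w i].

Definition selfc (n m : nat) (w : 'I_n -> seq ('I_m * bool)) (c : 'I_m) : bool :=
  comp w (c, true) == comp w (c, false).

Definition eps (m : nat) (x : 'I_m * bool) : int := if x.2 then -1 else 1.

Definition compatible (n m : nat) (w : 'I_n -> seq ('I_m * bool)) : Prop :=
  forall i : 'I_n, \sum_(x <- w i | ~~ selfc w x.1) eps x = 0.

Definition addb (a b : int * int) : int * int := (a.1 + b.1, a.2 + b.2)%R.
Definition bnorm (a : int * int) : int := (a.1 + a.2)%R.

Definition delta (n m : nat) (w : 'I_n -> seq ('I_m * bool)) (x : 'I_m * bool)
  : int * int := if selfc w x.1 then (eps x, 0%R) else (0%R, eps x).

(* bilabel on component i just before its k-th passage; st i = starting bilabel *)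
Definition bilabel (n m : nat) (w : 'I_n -> seq ('I_m * bool))
  (st : 'I_n -> int * int) (i : 'I_n) (k : nat) : int * int :=
  foldl (fun a x => addb a (delta w x)) (st i) (take k (w i)).

Definition lab_in (n m : nat) (w : 'I_n -> seq ('I_m * bool))
  (st : 'I_n -> int * int) (x : 'I_m * bool) : int * int :=
  if comp w x is Some i then bilabel w st i (index x (w i)) else (0%R, 0%R).

Definition lab_out (n m : nat) (w : 'I_n -> seq ('I_m * bool))
  (st : 'I_n -> int * int) (x : 'I_m * bool) : int * int :=
  if comp w x is Some i then bilabel w st i (index x (w i)).+1 else (0%R, 0%R).

(* weight of crossing c of sign b (true = positive):
   positive: |bottom-left| - |top-left| ; negative: |bottom-right| - |top-right| *)
Definition weight (n m : nat) (w : 'I_n -> seq ('I_m * bool))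
  (st : 'I_n -> int * int) (b : bool) (c : 'I_m) : int :=
  if b then (bnorm (lab_in w st (c, true)) - bnorm (lab_out w st (c, false)))%R
  else (bnorm (lab_in w st (c, false)) - bnorm (lab_out w st (c, true)))%R.

Definition sgnz (b : bool) : int := if b then 1%R else (-1)%R.

(* exponent vector of the Laurent monomial t_o^W *)
Definition monoL (n : nat) (o : option 'I_n) (W : int) : {ffun 'I_n -> int} :=
  [ffun j => if o == Some j then W else 0%R].

(* A Laurent polynomial in t_1..t_n is represented by its coefficient
   function on exponent vectors.  For a classical diagram with sign function
   sg (true = positive), the overstrand of c is the passage (c, sg c). *)
Definition p_coef (n m : nat) (w : 'I_n -> seq ('I_m * bool)) (sg : 'I_m -> bool)
  (st : 'I_n -> int * int) (e : {ffun 'I_n -> int}) : int :=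
  (\sum_(c < m) sgnz (sg c) *
     (((e == monoL (comp w (c, sg c)) (weight w st (sg c) c)) : nat)%:Z
      - ((e == [ffun => 0%R]) : nat)%:Z))%R.

Definition label1 (n m : nat) (w : 'I_n -> seq ('I_m * bool))
  (st1 : 'I_n -> int) (i : 'I_n) (k : nat) : int :=
  (st1 i + \sum_(x <- take k (w i)) eps x)%R.

Definition lab1_in (n m : nat) (w : 'I_n -> seq ('I_m * bool))
  (st1 : 'I_n -> int) (x : 'I_m * bool) : int :=
  if comp w x is Some i then label1 w st1 i (index x (w i)) else 0%R.

Definition lab1_out (n m : nat) (w : 'I_n -> seq ('I_m * bool))
  (st1 : 'I_n -> int) (x : 'I_m * bool) : int :=
  if comp w x is Some i then label1 w st1 i (index x (w i)).+1 else 0%R.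

Definition weight1 (n m : nat) (w : 'I_n -> seq ('I_m * bool))
  (st1 : 'I_n -> int) (b : bool) (c : 'I_m) : int :=
  if b then (lab1_in w st1 (c, true) - lab1_out w st1 (c, false))%R
  else (lab1_in w st1 (c, false) - lab1_out w st1 (c, true))%R.

(* coefficient of t^e in P_L(t) = sum_c sgn(c) (t^{W(c)} - 1) *)
Definition PL_coef (n m : nat) (w : 'I_n -> seq ('I_m * bool)) (sg : 'I_m -> bool)
  (st1 : 'I_n -> int) (e : int) : int :=
  (\sum_(c < m) sgnz (sg c) *
     (((e == weight1 w st1 (sg c) c) : nat)%:Z - ((e == 0%R) : nat)%:Z))%R.

(* kd c = Some true: positive classical crossing; Some false: negative;
   None: double point. *)
Definition ndouble (m : nat) (kd : 'I_m -> option bool) : nat :=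
  #|[pred c | kd c == None]|.

Definition resolve (m : nat) (kd : 'I_m -> option bool) (s : 'I_m -> bool)
  : 'I_m -> bool := fun c => if kd c is Some b then b else s c.

(* V(L_x) = V(L_+) - V(L_-) iterated over all double points, i.e. the signed
   sum over all resolutions of the double points. *)
Definition vext (m : nat) (V : ('I_m -> bool) -> int) (kd : 'I_m -> option bool)
  : int :=
  (\sum_(s : {ffun 'I_m -> bool} | [forall c, (kd c != None) ==> s c])
     (-1) ^+ #|[pred c | (kd c == None) && ~~ s c]| * V (resolve kd s))%R.

From Pilot Require Import Defs.
From mathcomp Require Import all_boot all_algebra.
Set Implicit Arguments. Unset Strict Implicit. Unset Printing Implicit Defensive.
Import GRing.Theory Num.Theory.
Local Open Scope ring_scope.

(* Labels are propagated without looking at crossing signs, so every resolution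
   of a singular diagram carries the same labels and weights.  Hence each
   coefficient of p_(L,C) (and of P_L) is a sum over crossings of a term
   depending on the sign of that crossing only.  The Vassiliev extension of
   such a sum vanishes as soon as there are two double points: for the term of
   crossing c, flipping the resolution of another double point d is a
   sign-reversing involution on the resolutions that fixes the term.  With one
   double point d the extension is the difference of the two possible terms of
   d; for a diagram whose first component has Gauss word a b a b (the other
   components carry no crossings), with b positive and a singular, this
   difference is t + t^-1 - 2. *)

Section VassilievExtension.

Variable m : nat.
Implicit Types (kd : 'I_m -> option bool) (s : {ffun 'I_m -> bool}).

Lemma sign_card_prod (P : pred 'I_m) (s : 'I_m -> bool) :
  (-1) ^+ #|[pred c | P c && ~~ s c]| = \prod_(c | P c) sgnz (s c) :> int.
Proof.
rewrite -prodr_const big_mkcond [RHS]big_mkcond /=.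
by apply: eq_bigr => c _; rewrite !inE; case: (P c); case: (s c).
Qed.

Definition flip_at (d : 'I_m) s : {ffun 'I_m -> bool} :=
  [ffun c => if c == d then ~~ s c else s c].

Lemma flip_atK d : involutive (flip_at d).
Proof. by move=> s; apply/ffunP => c; rewrite !ffunE; case: eqP => // _; rewrite negbK. Qed.

Lemma resolution_sum_flip_invariant kd d (F : {ffun 'I_m -> bool} -> int) :
  kd d = None -> (forall s, F (flip_at d s) = F s) ->
  \sum_(s : {ffun 'I_m -> bool} | [forall c, (kd c != None) ==> s c])
     (-1) ^+ #|[pred c | (kd c == None) && ~~ s c]| * F s = 0.
Proof.
move=> kd_d F_flip; set S := (\sum_(s | _) _).
suff : S = - S by move/eqP; rewrite eq_sym eqNr => /eqP.
rewrite {1}/S (reindex_inj (inv_inj (flip_atK d))) /= -sumrN.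
apply: eq_big => s.
  apply: eq_forallb => c; rewrite ffunE.
  by case: (c =P d) => [->|//]; rewrite kd_d.
move=> _; rewrite F_flip !sign_card_prod.
rewrite (bigD1 d) ?kd_d //= [in RHS](bigD1 d) ?kd_d //= ffunE eqxx.
have -> : \prod_(c | (kd c == None) && (c != d)) sgnz (flip_at d s c)
        = \prod_(c | (kd c == None) && (c != d)) sgnz (s c).
  by apply: eq_bigr => c /andP[_ /negbTE c_d]; rewrite ffunE c_d.
by case: (s d); rewrite /= ?mulN1r ?mul1r ?mulNr ?opprK.
Qed.

Variables (V : ('I_m -> bool) -> int) (g : 'I_m -> bool -> int).
Hypothesis V_sum : forall sg, V sg = \sum_(c < m) g c (sg c).

Lemma vext_sum_crossings_eq0 kd : (2 <= ndouble kd)%N -> vext V kd = 0.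
Proof.
move=> two_double; rewrite /vext.
under eq_bigr do rewrite V_sum mulr_sumr.
rewrite exchange_big /=; apply: big1 => c _.
have [d kd_d d_c] : exists2 d, kd d = None & d != c.
  move: two_double => /card_gt1P [x [y [+ + x_y]]]; rewrite !inE => /eqP kd_x /eqP kd_y.
  have [x_c|] := eqVneq x c; last by exists x.
  by exists y; rewrite // -x_c eq_sym.
apply: (resolution_sum_flip_invariant (F := fun s => g c (resolve kd s c))) kd_d _ => s.
by rewrite /resolve ffunE eq_sym (negbTE d_c).
Qed.

Lemma vext_single kd d : (forall c, (kd c == None) = (c == d)) ->
  vext V kd = V (resolve kd [ffun => true]) - V (resolve kd [ffun c => c != d]).
Proof.
move=> kdE; rewrite /vext.
set sT : {ffun 'I_m -> bool} := [ffun => true].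
set sF : {ffun 'I_m -> bool} := [ffun c => c != d].
have admissible s : [forall c, (kd c != None) ==> s c] = [forall (c | c != d), s c].
  by apply: eq_forallb => c; rewrite kdE.
have sTF : sF != sT by apply/eqP => /ffunP /(_ d); rewrite !ffunE eqxx.
rewrite (bigD1 sT) ?admissible; last by apply/forall_inP => c _; rewrite ffunE.
rewrite (bigD1 sF) /=; last by rewrite admissible sTF andbT; apply/forall_inP => c; rewrite ffunE.
rewrite big1 ?addr0 => [|s /andP[/andP[/forall_inP s_off s_T] s_F]].
  by rewrite !sign_card_prod !(big_pred1 d) // !ffunE eqxx mul1r mulN1r.
suff : (s == sT) || (s == sF) by rewrite (negbTE s_T) (negbTE s_F).
rewrite /sT /sF; apply/orP; have [s_d|s_d] := boolP (s d); [left|right];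
  apply/eqP/ffunP => c; rewrite !ffunE; have [->|c_d] := eqVneq c d;
  by rewrite ?(negbTE s_d) ?c_d //=; apply: s_off; rewrite kdE.
Qed.

Lemma vext_single_sum kd d : (forall c, (kd c == None) = (c == d)) ->
  vext V kd = g d true - g d false.
Proof.
move=> kdE; rewrite (vext_single kdE) !V_sum -sumrB (bigD1 d) //= big1 ?addr0.
  have kd_d : kd d = None by apply/eqP; rewrite kdE.
  by rewrite /resolve kd_d !ffunE eqxx.
move=> c c_d; rewrite /resolve; case kd_c: (kd c) => [b|]; first by rewrite subrr.
by move: (kdE c); rewrite kd_c eqxx (negbTE c_d).
Qed.

End VassilievExtension.

Section CrossingTerms.

Variables (n m : nat) (w : 'I_n -> seq ('I_m * bool)).

Definition p_term (st : 'I_n -> int * int) (e : {ffun 'I_n -> int}) (c : 'I_m) (b : bool)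
  : int :=
  sgnz b * (((e == monoL (Defs.comp w (c, b)) (weight w st b c)) : nat)%:Z
            - ((e == [ffun => 0]) : nat)%:Z).

Lemma p_coefE st e sg : p_coef w sg st e = \sum_(c < m) p_term st e c (sg c).
Proof. by []. Qed.

Definition PL_term (st1 : 'I_n -> int) (e : int) (c : 'I_m) (b : bool) : int :=
  sgnz b * (((e == weight1 w st1 b c) : nat)%:Z - ((e == 0) : nat)%:Z).

Lemma PL_coefE st1 e sg : PL_coef w sg st1 e = \sum_(c < m) PL_term st1 e c (sg c).
Proof. by []. Qed.

End CrossingTerms.

Lemma eq_monoL_Some n (i : 'I_n) (W W' : int) :
  (monoL (Some i) W == monoL (Some i) W') = (W == W').
Proof.
apply/eqP/eqP => [/ffunP /(_ i)|->]; last by [].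
by rewrite !ffunE eqxx.
Qed.

Lemma monoL_Some_eq0 n (i : 'I_n) (W : int) : (monoL (Some i) W == [ffun => 0]) = (W == 0).
Proof.
apply/eqP/eqP => [/ffunP /(_ i)|->]; first by rewrite !ffunE eqxx.
by apply/ffunP => j; rewrite !ffunE; case: eqP.
Qed.

Section TwoChordExample.

Variable n' : nat.

Definition xa : 'I_2 := ord0.
Definition xb : 'I_2 := ord_max.

Definition two_chord_word : seq ('I_2 * bool) :=
  [:: (xa, true); (xb, true); (xa, false); (xb, false)].

Definition ex_words (i : 'I_n'.+1) : seq ('I_2 * bool) :=
  if i == ord0 then two_chord_word else [::].

Definition ex_kind (c : 'I_2) : option bool := if c == xa then None else Some true.

Lemma mem_two_chord_word x : x \in two_chord_word.
Proof. by case: x => [[[|[|k]] lt_k] []]. Qed.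

Lemma ex_words0 : ex_words ord0 = two_chord_word.
Proof. by rewrite /ex_words eqxx. Qed.

Lemma comp_ex_words x : Defs.comp ex_words x = Some ord0.
Proof.
rewrite /Defs.comp; case: pickP => [i|/(_ ord0)]; last by rewrite ex_words0 mem_two_chord_word.
by rewrite /ex_words; case: eqP => [->|].
Qed.

Lemma selfc_ex_words c : selfc ex_words c.
Proof. by rewrite /selfc !comp_ex_words. Qed.

Lemma wf_ex_words : wf_words ex_words.
Proof.
rewrite /wf_words enum_ordSl /=.
have -> : flatten [seq ex_words i | i <- [seq lift ord0 i | i <- enum 'I_n']] = [::].
  by elim: (enum 'I_n') => //= i s ->.
by apply: uniq_perm (enum_uniq _) _ => // x; rewrite mem_enum mem_two_chord_word.
Qed.

Lemma compatible_ex_words : compatible ex_words.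
Proof. by move=> i; apply: big1 => x; rewrite selfc_ex_words. Qed.

Lemma ex_kindE c : (ex_kind c == None) = (c == xa).
Proof. by rewrite /ex_kind; case: (c == xa). Qed.

Lemma ndouble_ex_kind : ndouble ex_kind = 1%N.
Proof. by apply: eq_card1 => c; rewrite !inE ex_kindE. Qed.

Lemma weight_ex_words b :
  weight ex_words (fun=> (0, 0)) b xa = sgnz b.
Proof.
rewrite /weight /lab_in /lab_out !comp_ex_words /bilabel ex_words0 /= /delta.
by rewrite !selfc_ex_words; case: b.
Qed.

Lemma weight1_ex_words b : weight1 ex_words (fun=> 0) b xa = sgnz b.
Proof.
rewrite /weight1 /lab1_in /lab1_out !comp_ex_words /label1 ex_words0 /=.
by rewrite !big_cons !big_nil; case: b.
Qed.

Lemma vext_p_coef_ex_words :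
  vext (fun sg => p_coef ex_words sg (fun=> (0, 0)) (monoL (Some ord0) 1)) ex_kind = 1.
Proof.
rewrite (vext_single_sum (p_coefE ex_words _ _) ex_kindE) /p_term.
by rewrite !comp_ex_words !weight_ex_words !eq_monoL_Some monoL_Some_eq0.
Qed.

Lemma vext_PL_coef_ex_words :
  vext (fun sg => PL_coef ex_words sg (fun=> 0) 1) ex_kind = 1.
Proof.
by rewrite (vext_single_sum (PL_coefE ex_words _ _) ex_kindE) /PL_term !weight1_ex_words.
Qed.

End TwoChordExample.

Local Close Scope ring_scope.
Theorem proposition5 :
  (* multi-variable affine index polynomial p_(L,C): order <= 1 *)
  (forall (n m : nat) (w : 'I_n -> seq ('I_m * bool)) (kd : 'I_m -> option bool)
          (st : 'I_n -> int * int),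
      wf_words w -> compatible w -> 2 <= ndouble kd ->
      forall e : {ffun 'I_n -> int}, vext (fun sg => p_coef w sg st e) kd = 0%R)
  /\
  (* ... and not order <= 0 *)
  (forall n : nat, 0 < n ->
     exists (m : nat) (w : 'I_n -> seq ('I_m * bool)) (kd : 'I_m -> option bool)
            (st : 'I_n -> int * int) (e : {ffun 'I_n -> int}),
       [/\ wf_words w, compatible w, ndouble kd = 1
         & vext (fun sg => p_coef w sg st e) kd <> 0%R])
  /\
  (* Affine Index Polynomial P_K of virtual knots (n = 1): order <= 1 *)
  (forall (m : nat) (w : 'I_1 -> seq ('I_m * bool)) (kd : 'I_m -> option bool)
          (st1 : 'I_1 -> int),
      wf_words w -> 2 <= ndouble kd ->
      forall e : int, vext (fun sg => PL_coef w sg st1 e) kd = 0%R)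
  /\
  (* ... and not order <= 0 *)
  (exists (m : nat) (w : 'I_1 -> seq ('I_m * bool)) (kd : 'I_m -> option bool)
          (st1 : 'I_1 -> int) (e : int),
      [/\ wf_words w, ndouble kd = 1 & vext (fun sg => PL_coef w sg st1 e) kd <> 0%R])
  /\
  (* Kauffman's P_L of compatible virtual links with an affine labeling: order <= 1 *)
  (forall (n m : nat) (w : 'I_n -> seq ('I_m * bool)) (kd : 'I_m -> option bool)
          (st1 : 'I_n -> int),
      wf_words w -> compatible w -> 2 <= ndouble kd ->
      forall e : int, vext (fun sg => PL_coef w sg st1 e) kd = 0%R)
  /\
  (* ... and not order <= 0 *)
  (forall n : nat, 0 < n ->
     exists (m : nat) (w : 'I_n -> seq ('I_m * bool)) (kd : 'I_m -> option bool)
            (st1 : 'I_n -> int) (e : int),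
       [/\ wf_words w, compatible w, ndouble kd = 1
         & vext (fun sg => PL_coef w sg st1 e) kd <> 0%R]).
Proof.
have PL_order_le1 n m (w : 'I_n -> seq ('I_m * bool)) kd st1 e :
    2 <= ndouble kd -> vext (fun sg => PL_coef w sg st1 e) kd = 0%R.
  exact: vext_sum_crossings_eq0 (PL_coefE w st1 e) kd.
split; [|split; [|split; [|split; [|split]]]].
- move=> n m w kd st _ _ two_double e.
  exact: vext_sum_crossings_eq0 (p_coefE w st e) _ two_double.
- case=> // n' _; exists 2, (@ex_words n'), ex_kind, (fun=> (0, 0)%R), (monoL (Some ord0) 1%R).
  split; [exact: wf_ex_words | exact: compatible_ex_words | exact: ndouble_ex_kind |].
  by rewrite vext_p_coef_ex_words.
- by move=> m w kd st1 _ two_double e; apply: PL_order_le1.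
- exists 2, (@ex_words 0), ex_kind, (fun=> 0%R), 1%R.
  split; [exact: wf_ex_words | exact: ndouble_ex_kind |].
  by rewrite vext_PL_coef_ex_words.
- by move=> n m w kd st1 _ _ two_double e; apply: PL_order_le1.
- case=> // n' _; exists 2, (@ex_words n'), ex_kind, (fun=> 0%R), 1%R.
  split; [exact: wf_ex_words | exact: compatible_ex_words | exact: ndouble_ex_kind |].
  by rewrite vext_PL_coef_ex_words.
Qed.
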